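(* Let $X$ be a set, let $K,L$ be positive definite kernels on $X\times X$, and let $(\varphi,\mathscr{K})\in H_S(K)$ and $(\psi,\mathscr{L})\in H_S(L)$. Then $K\le L$ if and only if there exists a positive selfadjoint operator $B$ on $\mathscr{L}$ with $0\le B\le I$ such that $$K(x,y)=\langle\varphi(x),\varphi(y)\rangle_{\mathscr{K}}=\langle B^{1/2}\psi(x),B^{1/2}\psi(y)\rangle_{\mathscr{L}},\qquad x,y\in X.$$
   Context: A function $K:X\times X\to\mathbb{C}$ is positive definite (p.d.) if $\sum_{i,j=1}^n\overline{c_i}c_jK(x_i,x_j)\ge 0$ for all $n\in\mathbb{N}$, $x_i\in X$, $c_i\in\mathbb{C}$. For p.d. kernels $K,L$ on $X\times X$, $K\le L$ (Loewner order) means that $L-K$ is p.d. For a p.d. kernel $K$, $H_S(K)$ denotes the set of pairs $(\varphi,\mathscr{L})$ where $\mathscr{L}$ is a (separable) Hilbert space and $\varphi:X\to\mathscr{L}$ satisfies $K(x,y)=\langle\varphi(x),\varphi(y)\rangle_{\mathscr{L}}$ for all $x,y\in X$. *)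

From HB Require Import structures.
From mathcomp Require Import all_boot all_order all_algebra.
From mathcomp Require Import reals complex.
Set Implicit Arguments.
Unset Strict Implicit.
Unset Printing Implicit Defensive.
Import Order.TTheory GRing.Theory Num.Theory.
Local Open Scope ring_scope.
Local Open Scope complex_scope.

(* K : X x X -> C is positive definite:
   sum_{i,j} conj(c_i) c_j K(x_i,x_j) >= 0 (in the order of C, i.e. real
   and nonnegative) for all n, x_i, c_i. *)
Definition pd_kernel (R : realType) (X : Type) (K : X -> X -> R[i]) : Prop :=
  forall (n : nat) (x : 'I_n -> X) (c : 'I_n -> R[i]),
    0 <= \sum_(i < n) \sum_(j < n) ((c i)^* * c j * K (x i) (x j)).

Definition kernel_le (R : realType) (X : Type) (K L : X -> X -> R[i]) : Prop :=
  pd_kernel (fun x y => L x y - K x y).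

(* inner product: conjugate-linear in the first, linear in the second
   argument (consistent with the positive-definiteness convention above). *)
Record hilbert (R : realType) := Hilbert {
  hsort :> lmodType R[i];
  hinner : hsort -> hsort -> R[i];
  hinner_linear : forall (a : R[i]) (u v w : hsort),
      hinner u (a *: v + w) = a * hinner u v + hinner u w;
  hinner_conj : forall u v : hsort, hinner v u = (hinner u v)^*;
  hinner_ge0 : forall u : hsort, 0 <= hinner u u;
  hinner_eq0 : forall u : hsort, hinner u u = 0 -> u = 0;
  hcomplete : forall u : nat -> hsort,
      (forall e : R, 0 < e -> exists N : nat, forall m n : nat, (N <= m)%N -> (N <= n)%N ->
          Num.sqrt (complex.Re (hinner (u m - u n) (u m - u n))) < e) ->
      exists l : hsort, forall e : R, 0 < e -> exists N : nat, forall n : nat, (N <= n)%N ->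
          Num.sqrt (complex.Re (hinner (u n - l) (u n - l))) < e;
  hseparable : exists d : nat -> hsort, forall (v : hsort) (e : R), 0 < e ->
      exists n : nat, Num.sqrt (complex.Re (hinner (v - d n) (v - d n))) < e
}.

Arguments hinner {R} h _ _.


Section Operators.
Variables (R : realType) (H : hilbert R).

Definition hnorm (v : H) : R := Num.sqrt (complex.Re (hinner H v v)).

Definition bounded_op (B : H -> H) : Prop :=
  (forall (a : R[i]) (u v : H), B (a *: u + v) = a *: B u + B v) /\
  exists M : R, forall v : H, hnorm (B v) <= M * hnorm v.

Definition selfadjoint_op (B : H -> H) : Prop :=
  forall u v : H, hinner H (B u) v = hinner H u (B v).

Definition positive_op (B : H -> H) : Prop :=
  forall v : H, 0 <= hinner H v (B v).

Definition op_le (A B : H -> H) : Prop :=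
  forall v : H, hinner H v (A v) <= hinner H v (B v).

(* C is the positive square root B^{1/2} of B: C bounded, selfadjoint,
   positive, and C o C = B (such a C is unique for positive B). *)
Definition pos_sqrt_of (B C : H -> H) : Prop :=
  bounded_op C /\ selfadjoint_op C /\ positive_op C /\ (forall v, C (C v) = B v).

End Operators.

(* If [K <= L], the map [sum c_j psi(x_j) |-> sum c_j phi(x_j)] is well defined and
   contractive on the span of [psi]; extended by continuity to the closed span and by
   zero on its orthogonal complement, it is a contraction [G] with [G \o psi = phi].
   Then [B = G^* G] satisfies [0 <= B <= I] and [<B psi x, psi y> = K x y], and its
   positive square root is [I - Y], where [Y] is the limit of the iteration
   [Y_(k+1) = (I - B + Y_k^2) / 2].  Conversely, positivity of [L - K] on the
   coefficients [c] is [<w, (I - B) w> >= 0] for [w = sum c_j psi(x_j)]. *)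

From mathcomp Require Import all_boot all_order all_algebra.
From mathcomp Require Import reals complex.
From mathcomp Require Import boolp classical_sets.
From mathcomp Require Import ring lra.

Set Implicit Arguments.
Unset Strict Implicit.
Unset Printing Implicit Defensive.
Import Order.TTheory GRing.Theory Num.Theory Normc.
Local Open Scope ring_scope.
Local Open Scope complex_scope.

Section RealFacts.
Variable R : realType.

Lemma ler_of_sqr (x y : R) : 0 <= y -> x ^+ 2 <= y ^+ 2 -> x <= y.
Proof.
move=> y0 h; case: (lerP x 0) => [x0|x0]; first exact: le_trans x0 y0.
by rewrite -(ler_pXn2r (n := 2)) // nnegrE ltW.
Qed.

Lemma invSn_lt (e : R) : 0 < e -> exists N : nat, (N.+1%:R : R)^-1 < e.
Proof. by move=> e0; have [k] := ltr_add_invr e0; rewrite add0r; exists k. Qed.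

Lemma invSn_le (N n : nat) : (N <= n)%N -> (n.+1%:R : R)^-1 <= (N.+1%:R)^-1.
Proof. by move=> h; rewrite lef_pV2 ?posrE ?ltr0Sn // ler_nat. Qed.

End RealFacts.

Section ComplexModulus.
Variable R : realType.
Implicit Types (x : R) (z w : R[i]).

Lemma normc_ge0 z : 0 <= normc z.
Proof. by case: z => a b; rewrite /normc sqrtr_ge0. Qed.

Lemma normc_sqr z : normc z ^+ 2 = complex.Re z ^+ 2 + complex.Im z ^+ 2.
Proof. by case: z => a b; rewrite /normc /= sqr_sqrtr // addr_ge0 // sqr_ge0. Qed.

Lemma Re_le_normc z : complex.Re z <= normc z.
Proof.
apply: le_trans (ler_norm _) _; apply: ler_of_sqr; first exact: normc_ge0.
by rewrite real_normK ?num_real // normc_sqr lerDl sqr_ge0.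
Qed.

Lemma mulcJ_normc z : z * conjc z = (normc z ^+ 2)%:C.
Proof. by case: z => a b; rewrite normc_sqr /=; simpc; congr Complex; ring. Qed.

Lemma conjc_realE x : conjc x%:C = x%:C.
Proof. by rewrite /= oppr0. Qed.

Lemma conjc_realM x z : conjc (x%:C * z) = x%:C * conjc z.
Proof. by case: z => a b; simpc; congr Complex; ring. Qed.

Lemma normc_real x : normc x%:C = `|x|.
Proof. by rewrite /normc /= expr0n /= addr0 sqrtr_sqr. Qed.

Lemma eq0_small_normc z : (forall e : R, 0 < e -> normc z <= e) -> z = 0.
Proof.
move=> h; apply: eq0_normc; apply/eqP; rewrite eq_le normc_ge0 andbT.
by apply/ler_addgt0Pr => e e0; rewrite add0r h.
Qed.

Lemma selfconjc_real z : conjc z = z -> z = (complex.Re z)%:C.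
Proof. by case: z => a b /= [] h; have -> : b = 0 by lra. Qed.

End ComplexModulus.

Section LinearMaps.
Variables (K : pzRingType) (U V : lmodType K) (T : U -> V) (Tlin : linear T).

Lemma lin0 : T 0 = 0.
Proof.
have := Tlin 1 0 0; rewrite !scale1r addr0 => e.
by apply: (@addrI _ (T 0)); rewrite addr0 -e.
Qed.

Lemma linD u v : T (u + v) = T u + T v.
Proof. by rewrite -[u in LHS]scale1r Tlin scale1r. Qed.

Lemma linZ a u : T (a *: u) = a *: T u.
Proof. by rewrite -[a *: u]addr0 Tlin lin0 addr0. Qed.

Lemma linB u v : T (u - v) = T u - T v.
Proof. by rewrite linD -scaleN1r linZ scaleN1r. Qed.

Lemma lin_sum (I : Type) (r : seq I) (F : I -> U) :
  T (\sum_(i <- r) F i) = \sum_(i <- r) T (F i).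
Proof. exact: (big_morph T linD lin0). Qed.

End LinearMaps.

Section InnerProduct.
Variables (R : realType) (H : hilbert R).
Local Notation ip := (hinner H).
Implicit Types (u v w : H) (a : R[i]).

Lemma hinnerDr u v w : ip u (v + w) = ip u v + ip u w.
Proof. by rewrite -[v in LHS]scale1r hinner_linear mul1r. Qed.

Lemma hinner0r u : ip u 0 = 0.
Proof.
have := hinnerDr u 0 0; rewrite addr0 => e.
by apply: (@addrI _ (ip u 0)); rewrite addr0 -e.
Qed.

Lemma hinnerZr u a v : ip u (a *: v) = a * ip u v.
Proof. by rewrite -[a *: v]addr0 hinner_linear hinner0r addr0. Qed.

Lemma hinnerNr u v : ip u (- v) = - ip u v.
Proof. by rewrite -scaleN1r hinnerZr mulN1r. Qed.

Lemma hinnerBr u v w : ip u (v - w) = ip u v - ip u w.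
Proof. by rewrite hinnerDr hinnerNr. Qed.

Lemma hinnerDl u v w : ip (u + v) w = ip u w + ip v w.
Proof. by rewrite hinner_conj hinnerDr rmorphD /= -!hinner_conj. Qed.

Lemma hinner0l u : ip 0 u = 0.
Proof. by rewrite hinner_conj hinner0r conjc0. Qed.

Lemma hinnerZl a u v : ip (a *: u) v = conjc a * ip u v.
Proof. by rewrite hinner_conj hinnerZr rmorphM /= -hinner_conj. Qed.

Lemma hinnerNl u v : ip (- u) v = - ip u v.
Proof. by rewrite -scaleN1r hinnerZl rmorphN rmorph1 mulN1r. Qed.

Lemma hinnerBl u v w : ip (u - v) w = ip u w - ip v w.
Proof. by rewrite hinnerDl hinnerNl. Qed.

Lemma hinner_sumr (I : Type) (r : seq I) (F : I -> H) u :
  ip u (\sum_(i <- r) F i) = \sum_(i <- r) ip u (F i).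
Proof. exact: (big_morph (ip u) (hinnerDr u) (hinner0r u)). Qed.

Lemma hinner_suml (I : Type) (r : seq I) (F : I -> H) u :
  ip (\sum_(i <- r) F i) u = \sum_(i <- r) ip (F i) u.
Proof. exact: (big_morph (ip^~ u) (fun x y => hinnerDl x y u) (hinner0l u)). Qed.

Lemma hinner_comb (n : nat) (c : 'I_n -> R[i]) (f g : 'I_n -> H) :
  ip (\sum_(i < n) c i *: f i) (\sum_(j < n) c j *: g j) =
  \sum_(i < n) \sum_(j < n) (conjc (c i) * c j * ip (f i) (g j)).
Proof.
rewrite hinner_suml; apply: eq_bigr => i _; rewrite hinner_sumr.
by apply: eq_bigr => j _; rewrite hinnerZl hinnerZr mulrA.
Qed.

Lemma hinner_injl v w : (forall u, ip v u = ip w u) -> v = w.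
Proof.
move=> h; apply/eqP; rewrite -subr_eq0; apply/eqP; apply: hinner_eq0.
by rewrite hinnerBl h subrr.
Qed.

Definition hnorm2 v : R := complex.Re (ip v v).

Lemma hinner_self v : ip v v = (hnorm2 v)%:C.
Proof. by apply: selfconjc_real; rewrite -hinner_conj. Qed.

Lemma hnorm2_ge0 v : 0 <= hnorm2 v.
Proof. by have := hinner_ge0 v; rewrite hinner_self lecR. Qed.

Lemma hnorm_ge0 v : 0 <= hnorm v.
Proof. exact: sqrtr_ge0. Qed.

Lemma hnorm_sqr v : hnorm v ^+ 2 = hnorm2 v.
Proof. by rewrite /hnorm sqr_sqrtr // hnorm2_ge0. Qed.

Lemma hnorm2_eq0 v : hnorm2 v = 0 -> v = 0.
Proof. by move=> h; apply: hinner_eq0; rewrite hinner_self h. Qed.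

Lemma hnorm_eq0 v : hnorm v = 0 -> v = 0.
Proof. by move=> h; apply: hnorm2_eq0; rewrite -hnorm_sqr h expr0n. Qed.

Lemma hnorm0 : hnorm (0 : H) = 0.
Proof. by rewrite /hnorm hinner0r /= sqrtr0. Qed.

Lemma hnorm2D u v :
  hnorm2 (u + v) = hnorm2 u + hnorm2 v + complex.Re (ip u v) + complex.Re (ip v u).
Proof. by rewrite /hnorm2 !(hinnerDl, hinnerDr) !raddfD /=; ring. Qed.

Lemma hnorm2_parallelogram u v :
  hnorm2 (u - v) + hnorm2 (u + v) = 2 * hnorm2 u + 2 * hnorm2 v.
Proof.
by rewrite /hnorm2 !(hinnerDl, hinnerDr, hinnerNl, hinnerNr) opprK !(raddfD, raddfN) /=; ring.
Qed.

(* [0 <= |a v - z u|^2] with [a = |u|^2] and [z = <u, v>] is [0 <= a (a |v|^2 - |z|^2)]. *)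
Lemma normc_hinner_le u v : normc (ip u v) <= hnorm u * hnorm v.
Proof.
apply: ler_of_sqr; first by rewrite mulr_ge0 // hnorm_ge0.
rewrite exprMn !hnorm_sqr.
have [u0|unz] := eqVneq (hnorm2 u) 0.
  by rewrite u0 mul0r (hnorm2_eq0 u0) hinner0l normc0 expr0n.
have ua : 0 < hnorm2 u by rewrite lt0r unz hnorm2_ge0.
set a := hnorm2 u; set z := ip u v.
have := hinner_ge0 (a%:C *: v - z *: u).
rewrite !(hinnerBl, hinnerBr, hinnerZl, hinnerZr) (hinner_conj u v) -/z.
rewrite !hinner_self -/a conjc_realE.
have -> : a%:C * (a%:C * (hnorm2 v)%:C - z * conjc z) - conjc z * (a%:C * z - z * a%:C)
    = (a * (a * hnorm2 v - normc z ^+ 2))%:C.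
  rewrite mulcJ_normc [z * a%:C]mulrC subrr mulr0 subr0.
  by rewrite -rmorphM -rmorphB -rmorphM.
by rewrite lecR pmulr_rge0 // subr_ge0.
Qed.

Lemma Re_hinner_le u v : complex.Re (ip u v) <= hnorm u * hnorm v.
Proof. exact: le_trans (Re_le_normc _) (normc_hinner_le u v). Qed.

Lemma hnormD u v : hnorm (u + v) <= hnorm u + hnorm v.
Proof.
apply: ler_of_sqr; first by rewrite addr_ge0 // hnorm_ge0.
rewrite hnorm_sqr hnorm2D sqrrD !hnorm_sqr.
have := Re_hinner_le u v; have := Re_hinner_le v u; lra.
Qed.

Lemma hnormZ a v : hnorm (a *: v) = normc a * hnorm v.
Proof.
rewrite /hnorm hinnerZl hinnerZr mulrA [conjc a * a]mulrC mulcJ_normc hinner_self.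
rewrite -rmorphM /= sqrtrM ?sqr_ge0 // sqrtr_sqr ger0_norm //; exact: normc_ge0.
Qed.

Lemma hnormN v : hnorm (- v) = hnorm v.
Proof. by rewrite -scaleN1r hnormZ normcN normc1 mul1r. Qed.

Lemma hdistC u v : hnorm (u - v) = hnorm (v - u).
Proof. by rewrite -hnormN opprB. Qed.

Lemma hdist_triangle u v w : hnorm (u - w) <= hnorm (u - v) + hnorm (v - w).
Proof. by have := hnormD (u - v) (v - w); rewrite addrA subrK. Qed.

End InnerProduct.

Lemma ler_hnorm (R : realType) (H1 H2 : hilbert R) (u : H1) (v : H2) :
  (hnorm u <= hnorm v) = (hnorm2 u <= hnorm2 v).
Proof. by rewrite -!hnorm_sqr ler_pXn2r // nnegrE hnorm_ge0. Qed.

Section Convergence.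
Variables (R : realType) (H : hilbert R).
Local Notation ip := (hinner H).
Implicit Types (u w : nat -> H) (l : H).

Definition hlim u l := forall e : R, 0 < e ->
  exists N : nat, forall n, (N <= n)%N -> hnorm (u n - l) < e.

Definition hcauchy u := forall e : R, 0 < e ->
  exists N : nat, forall m n, (N <= m)%N -> (N <= n)%N -> hnorm (u m - u n) < e.

Lemma hcauchy_lim u : hcauchy u -> exists l, hlim u l.
Proof. exact: hcomplete. Qed.

Lemma hlim_cauchy u l : hlim u l -> hcauchy u.
Proof.
move=> h e e0; have [N hN] := h (e / 2) (divr_gt0 e0 (ltr0Sn _ 1)).
exists N => m n hm hn; apply: le_lt_trans (hdist_triangle _ l _) _.
rewrite (hdistC l); have := hN m hm; have := hN n hn; lra.
Qed.

Lemma hlim_unique u l (l' : H) : hlim u l -> hlim u l' -> l = l'.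
Proof.
move=> hl hm; apply/eqP; rewrite -subr_eq0; apply/eqP/hnorm_eq0/eqP.
rewrite eq_le hnorm_ge0 andbT; apply/ler_addgt0Pr => e e0; rewrite add0r.
have [N hN] := hl (e / 2) (divr_gt0 e0 (ltr0Sn _ 1)).
have [N' hN'] := hm (e / 2) (divr_gt0 e0 (ltr0Sn _ 1)).
have := hN (maxn N N') (leq_maxl _ _); have := hN' (maxn N N') (leq_maxr _ _).
have := hdist_triangle l (u (maxn N N')) l'; rewrite (hdistC l (u _)); lra.
Qed.

Lemma hlim_cst l : hlim (fun _ => l) l.
Proof. by move=> e e0; exists 0%N => n _; rewrite subrr hnorm0. Qed.

Lemma hlim_ext u w l : (forall n, u n = w n) -> hlim u l -> hlim w l.
Proof. by move=> e h e0 he; have [N hN] := h e0 he; exists N => n hn; rewrite -e hN. Qed.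

Lemma hlimS u l : hlim u l -> hlim (fun n => u n.+1) l.
Proof. by move=> h e e0; have [N hN] := h e e0; exists N => n hn; apply: hN; exact: leqW. Qed.

Lemma hlim_lin (a : R[i]) u l w (l' : H) : hlim u l -> hlim w l' ->
  hlim (fun n => a *: u n + w n) (a *: l + l').
Proof.
move=> hl hm e e0.
have c0 : 0 < 2 * (normc a + 1) by rewrite mulr_gt0 // ltr_pwDr // normc_ge0.
have [N hN] := hl (e / (2 * (normc a + 1))) (divr_gt0 e0 c0).
have [N' hN'] := hm (e / 2) (divr_gt0 e0 (ltr0Sn _ 1)).
exists (maxn N N') => n; rewrite geq_max => /andP[hn hn'].
have -> : a *: u n + w n - (a *: l + l') = a *: (u n - l) + (w n - l').
  by rewrite scalerBr opprD addrACA.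
apply: le_lt_trans (hnormD _ _) _; rewrite hnormZ.
have h1 : normc a * hnorm (u n - l) <= normc a * (e / (2 * (normc a + 1))).
  by rewrite ler_wpM2l ?normc_ge0 // ltW // hN.
have h2 : normc a * (e / (2 * (normc a + 1))) <= e / 2.
  rewrite mulrCA ler_wpM2l ?(ltW e0) // ler_pdivrMr //.
  by have := normc_ge0 a; lra.
have := hN' n hn'; lra.
Qed.

Lemma hlim_hinner0 u l (x : H) : hlim u l -> (forall n, ip (u n) x = 0) -> ip l x = 0.
Proof.
move=> h h0; apply: eq0_small_normc => e e0.
have c0 : 0 < hnorm x + 1 by have := hnorm_ge0 x; lra.
have [N hN] := h _ (divr_gt0 e0 c0).
have -> : ip l x = ip (l - u N) x by rewrite hinnerBl h0 subr0.
apply: le_trans (normc_hinner_le _ _) _; rewrite hdistC.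
apply: le_trans (_ : e / (hnorm x + 1) * hnorm x <= _).
  by rewrite ler_wpM2r ?hnorm_ge0 // ltW // hN.
rewrite -mulrA ger_pMr // mulrC ler_pdivrMr // mul1r; lra.
Qed.

Lemma hlim_bound u l (x : H) (c : R) :
  hlim u l -> (forall n, hnorm (u n - x) <= c) -> hnorm (l - x) <= c.
Proof.
move=> h hc; apply/ler_addgt0Pr => e e0.
have [N hN] := h e e0; have := hN N (leqnn N); have := hc N.
have := hdist_triangle l (u N) x; rewrite (hdistC l (u N)); lra.
Qed.

End Convergence.

Lemma hlim_of_dist_le (R : realType) (H1 H2 : hilbert R)
    (a b : nat -> H1) (p : H1) (c d : nat -> H2) (g : H2) :
  hlim a p -> hlim b p -> hlim c g ->
  (forall n, hnorm (d n - c n) <= hnorm (b n - a n)) -> hlim d g.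
Proof.
move=> ha hb hc hdc e e0.
have e3 : 0 < e / 3 by rewrite divr_gt0.
have [N1 h1] := ha _ e3; have [N2 h2] := hb _ e3; have [N3 h3] := hc _ e3.
exists (maxn N1 (maxn N2 N3)) => n; rewrite !geq_max => /and3P[hn1 hn2 hn3].
have := h1 n hn1; have := h2 n hn2; have := h3 n hn3; have := hdc n.
have := hdist_triangle (d n) (c n) g; have := hdist_triangle (b n) p (a n).
rewrite (hdistC p (a n)); lra.
Qed.

Section Projection.
Variables (R : realType) (H : hilbert R).
Local Notation ip := (hinner H).

(* Testing minimality at [t = s <x, w>], [s = 1 / (|x|^2 + 1)], gives
   [0 <= s |<x, w>|^2 (s |x|^2 - 2)], where the last factor is negative. *)
Lemma hinner_eq0_of_min (w x : H) :
  (forall t : R[i], hnorm2 w <= hnorm2 (w - t *: x)) -> ip x w = 0.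
Proof.
move=> h; set z := ip x w.
set s : R := (hnorm2 x + 1)^-1.
have x0 := hnorm2_ge0 x.
have s0 : 0 < s by rewrite invr_gt0; lra.
have hs : s * hnorm2 x < 1.
  by rewrite mulrC -/(hnorm2 x / (hnorm2 x + 1)) ltr_pdivrMr ?mul1r; lra.
have := h (s%:C * z).
rewrite /hnorm2 !(hinnerBl, hinnerBr, hinnerZl, hinnerZr) (hinner_conj x w) -/z.
rewrite !hinner_self conjc_realM.
have -> : (hnorm2 w)%:C - s%:C * z * conjc z - s%:C * conjc z * (z - s%:C * z * (hnorm2 x)%:C)
    = (hnorm2 w)%:C - 2%:R * s%:C * (z * conjc z) + s%:C * s%:C * (z * conjc z) * (hnorm2 x)%:C.
  by ring.
rewrite mulcJ_normc -(rmorph_nat (real_complex R) 2) -!rmorphM -rmorphB -rmorphD.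
move=> /= h1.
have neg : s * (s * hnorm2 x - 2) < 0 by rewrite pmulr_rlt0 //; lra.
have : 0 <= normc z ^+ 2 * (s * (s * hnorm2 x - 2)) by lra.
rewrite nmulr_lge0 // le_eqVlt ltNge sqr_ge0 orbF sqrf_eq0 => /eqP; exact: eq0_normc.
Qed.

Variables (M : H -> Prop) (M0 : M 0)
  (Mlin : forall (a : R[i]) (u w : H), M u -> M w -> M (a *: u + w)).

Section Minimizing.
Variables (v : H) (d : R) (ms : nat -> H).
Hypotheses (dlb : forall m, M m -> d <= hnorm (v - m)) (Mms : forall n, M (ms n))
  (ms_dist : forall n, hnorm (v - ms n) < d + n.+1%:R^-1).

(* Parallelogram law: [|m_i - m_j|^2 = 2|v - m_i|^2 + 2|v - m_j|^2 - 4|v - (m_i + m_j)/2|^2],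
   and the midpoint lies in [M], hence is at distance at least [d] from [v]. *)
Lemma minimizing_cauchy : 0 <= d -> hcauchy ms.
Proof.
move=> d0 e e0.
have k0 : 0 < e ^+ 2 / (8 * d + 4) by rewrite divr_gt0 ?exprn_gt0 //; lra.
have [N hN] := invSn_lt k0.
exists N => i j hi hj.
set dl := (N.+1%:R : R)^-1 in hN.
have dl0 : 0 < dl by rewrite invr_gt0 ltr0Sn.
have dl1 : dl <= 1 by rewrite invf_le1 ?ltr0Sn // ler1n.
have near_d k : (N <= k)%N -> hnorm (v - ms k) ^+ 2 <= (d + dl) ^+ 2.
  move=> hk; rewrite ler_pXn2r ?nnegrE ?hnorm_ge0 //; last lra.
  by apply/ltW/(lt_le_trans (ms_dist k)); rewrite lerD2l invSn_le.
pose mid := 2^-1 *: ms i + 2^-1 *: ms j.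
have d_mid : d ^+ 2 <= hnorm (v - mid) ^+ 2.
  rewrite ler_pXn2r ?nnegrE ?hnorm_ge0 // dlb //.
  by have := Mlin (2^-1) (Mms i) (Mlin (2^-1) (Mms j) M0); rewrite addr0.
have par := hnorm2_parallelogram (v - ms i) (v - ms j).
have e1 : v - ms i - (v - ms j) = - (ms i - ms j).
  by rewrite opprB addrC addrA subrK opprB.
have e2 : v - ms i + (v - ms j) = 2%:R *: (v - mid).
  rewrite scalerBr /mid scalerDr !scalerA mulfV ?pnatr_eq0 // !scale1r scaler_nat mulr2n.
  by rewrite opprD addrACA.
rewrite e1 e2 -!hnorm_sqr hnormN hnormZ -(rmorph_nat (real_complex R)) normc_real in par.
have := near_d i hi; have := near_d j hj.
have a4 : (8 * d + 4) * dl < e ^+ 2 by rewrite mulrC -ltr_pdivlMr //; lra.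
have a5 : dl ^+ 2 <= dl by rewrite expr2 ger_pMr.
rewrite -(ltr_pXn2r (n := 2)) ?nnegrE ?hnorm_ge0 ?(ltW e0) //.
rewrite normr_nat exprMn in par; rewrite !expr2 in par d_mid a5 *; nra.
Qed.

Lemma minimizing_lim_orth p : hlim ms p -> forall x, M x -> ip x (v - p) = 0.
Proof.
move=> hp x hx; apply: hinner_eq0_of_min => t; rewrite -ler_hnorm.
have dist_p : hnorm (v - p) <= d.
  apply/ler_addgt0Pr => e e0.
  have [N1 hN1] := invSn_lt (divr_gt0 e0 (ltr0Sn R 1)).
  have [N2 hN2] := hp _ (divr_gt0 e0 (ltr0Sn R 1)).
  set n := maxn N1 N2.
  have hn : n.+1%:R^-1 < e / 2 := le_lt_trans (invSn_le R (leq_maxl N1 N2)) hN1.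
  have := hN2 n (leq_maxr _ _); have := ms_dist n; have := hdist_triangle v (ms n) p.
  move: hn; set b := n.+1%:R^-1; lra.
apply: le_trans dist_p _; apply/ler_addgt0Pr => e e0.
have [N hN] := hp e e0.
have := dlb (Mlin t hx (Mms N)).
have -> : v - (t *: x + ms N) = (v - p - t *: x) + (p - ms N).
  by rewrite opprD addrA [RHS]addrA (addrAC (v - p)) subrK.
have := hnormD (v - p - t *: x) (p - ms N); have := hN N (leqnn N); rewrite (hdistC p); lra.
Qed.

End Minimizing.

Theorem hprojection (v : H) : exists p : H,
  (exists ms : nat -> H, (forall n, M (ms n)) /\ hlim ms p) /\
  (forall x, M x -> ip x (v - p) = 0).
Proof.
pose E : set R := fun r => exists m, M m /\ r = hnorm (v - m).
have hinf : has_inf E.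
  split; first by exists (hnorm (v - 0)); exists 0.
  by exists 0 => r [m [_ ->]]; exact: hnorm_ge0.
have dlb m : M m -> inf E <= hnorm (v - m) by move=> hm; apply: (ge_inf hinf.2); exists m.
have d0 : 0 <= inf E by apply: lb_le_inf hinf.1 _ => r [m [_ ->]]; exact: hnorm_ge0.
have approx n : exists m, M m /\ hnorm (v - m) < inf E + n.+1%:R^-1.
  have hpos : 0 < (n.+1%:R : R)^-1 by rewrite invr_gt0 ltr0Sn.
  have [r [m [hm ->]] hr] := inf_adherent hpos hinf.
  by exists m.
have [ms hms] := choice approx.
have Mms n : M (ms n) := (hms n).1.
have [p hp] := hcauchy_lim (minimizing_cauchy dlb Mms (fun n => (hms n).2) d0).
exists p; split; first by exists ms.
by move=> x; exact: (minimizing_lim_orth dlb Mms (fun n => (hms n).2) hp).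
Qed.

End Projection.

Section Riesz.
Variables (R : realType) (H : hilbert R).
Local Notation ip := (hinner H).
Variables (f : H -> R[i])
  (flin : forall (a : R[i]) (u v : H), f (a *: u + v) = a * f u + f v)
  (c : R) (fbound : forall v, normc (f v) <= c * hnorm v).

Lemma functional0 : f 0 = 0.
Proof.
have := flin 1 0 0; rewrite scale1r addr0 mul1r => e.
by apply: (@addrI _ (f 0)); rewrite addr0 -e.
Qed.

Lemma functionalB u v : f (u - v) = f u - f v.
Proof. by rewrite -scaleN1r addrC flin mulN1r addrC. Qed.

Lemma functional_lim0 ms p : hlim ms p -> (forall n, f (ms n) = 0) -> f p = 0.
Proof.
move=> hp h0; apply: eq0_small_normc => e e0.
have c0 : 0 < `|c| + 1 by have := normr_ge0 c; lra.
have [N hN] := hp _ (divr_gt0 e0 c0).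
have -> : f p = f (p - ms N) by rewrite functionalB h0 subr0.
apply: le_trans (fbound _) _; apply: le_trans (_ : `|c| * hnorm (p - ms N) <= _).
  by rewrite ler_wpM2r ?hnorm_ge0 // ler_norm.
apply: le_trans (_ : `|c| * (e / (`|c| + 1)) <= _).
  by rewrite ler_wpM2l // ltW // hdistC hN.
rewrite mulrCA ger_pMr // ler_pdivrMr // mul1r; lra.
Qed.

(* If [f z != 0], the component [u] of [z] orthogonal to [ker f] satisfies
   [<u, v> = f v / f u * <u, u>] for all [v]. *)
Theorem riesz_representation : exists w : H, forall v, f v = ip w v.
Proof.
have [[z fz]|nz] := EM (exists z, f z <> 0); last first.
  exists 0 => v; rewrite hinner0l.
  by apply: contrapT => hv; apply: nz; exists v.
pose M u := f u = 0.
have Mlin a u w : M u -> M w -> M (a *: u + w).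
  by rewrite /M flin => -> ->; rewrite mulr0 addr0.
have [p [[ms [Mms hp]] orth]] := hprojection (functional0 : M 0) Mlin z.
pose u := z - p.
have fu : f u <> 0 by rewrite /u functionalB (functional_lim0 hp Mms) subr0.
have uu : ip u u <> 0 by move=> h; apply: fu; rewrite (hinner_eq0 h) functional0.
have key v : ip u v = f v / f u * ip u u.
  have hx : M (v - (f v / f u) *: u).
    rewrite /M functionalB -[_ *: u]addr0 flin functional0 addr0 mulfVK ?subrr //.
    exact/eqP.
  have := orth _ hx; rewrite -/u hinnerBl hinnerZl => /eqP; rewrite subr_eq0 => /eqP h.
  by rewrite hinner_conj h rmorphM /= conjcK hinner_self conjc_realE.
exists (conjc (f u / ip u u) *: u) => v.
rewrite hinnerZl conjcK (key v).
by field; apply/andP; split; apply/eqP.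
Qed.

End Riesz.

Lemma hadjoint_exists (R : realType) (H1 H2 : hilbert R) (G : H2 -> H1) (c : R) :
  linear G -> (forall v, hnorm (G v) <= c * hnorm v) ->
  exists Gadj : H1 -> H2, forall w u, hinner H2 (Gadj w) u = hinner H1 w (G u).
Proof.
move=> Glin Gbd.
suff /choice[Gadj hGadj] : forall w, exists w', forall u, hinner H1 w (G u) = hinner H2 w' u.
  by exists Gadj => w u; rewrite hGadj.
move=> w; apply: (@riesz_representation R H2 (fun u => hinner H1 w (G u)) _ (hnorm w * c)).
  by move=> a u v; rewrite Glin hinnerDr hinnerZr.
move=> v; apply: le_trans (normc_hinner_le _ _) _; rewrite -mulrA.
by rewrite ler_wpM2l ?hnorm_ge0 ?Gbd.
Qed.

Lemma linearB_id (K : pzRingType) (U : lmodType K) (T : U -> U) :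
  linear T -> linear (fun v => v - T v).
Proof. by move=> Tlin a u v; rewrite Tlin scalerBr opprD addrACA. Qed.

Lemma selfadjointB_id (R : realType) (H : hilbert R) (T : H -> H) :
  selfadjoint_op T -> selfadjoint_op (fun v => v - T v).
Proof. by move=> Tsa u v; rewrite hinnerBl hinnerBr Tsa. Qed.

Section ContractionSqrt.
Variables (R : realType) (H : hilbert R) (S : H -> H).
Hypotheses (Slin : linear S) (Ssa : selfadjoint_op S)
  (Scontr : forall v, hnorm (S v) <= hnorm v).
Local Notation ip := (hinner H).
Local Notation half := ((2^-1 : R)%:C).

(* The limit [Y] of [Y_(k+1) = (S + Y_k^2) / 2] solves [Y = (S + Y^2) / 2], that is
   [(I - Y)^2 = I - S]; the scalar recursion [q_(k+1) = (1 + q_k^2) / 2] bounds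
   [|Y_k|] and [|Y_(k+1) - Y_k|]. *)
Fixpoint sqrt_iter (k : nat) (v : H) : H :=
  if k is k'.+1 then half *: (S v + sqrt_iter k' (sqrt_iter k' v)) else 0.

Fixpoint sqrt_bound (k : nat) : R :=
  if k is k'.+1 then (1 + sqrt_bound k' ^+ 2) / 2 else 0.

Local Notation Y := sqrt_iter.
Local Notation q := sqrt_bound.

Lemma sqrt_iter_linear k : linear (Y k).
Proof.
elim: k => [|k IH] a u v /=; first by rewrite scaler0 addr0.
rewrite Slin IH IH [in RHS]scalerA [a * half]mulrC -[in RHS]scalerA -scalerDr.
by congr (_ *: _); rewrite scalerDr addrACA.
Qed.

Lemma sqrt_iter_commS k v : Y k (S v) = S (Y k v).
Proof.
elim: k v => [|k IH] v /=; first by rewrite (lin0 Slin).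
by rewrite !IH -(linD Slin) -(linZ Slin).
Qed.

Lemma sqrt_iter_comm k j v : Y k (Y j v) = Y j (Y k v).
Proof.
elim: k j v => [|k IH] j v /=; first by rewrite (lin0 (sqrt_iter_linear j)).
by rewrite -sqrt_iter_commS IH IH -(linD (sqrt_iter_linear j)) -(linZ (sqrt_iter_linear j)).
Qed.

Lemma sqrt_iter_selfadjoint k : selfadjoint_op (Y k).
Proof.
elim: k => [|k IH] u v /=; first by rewrite hinner0l hinner0r.
by rewrite hinnerZl hinnerZr conjc_realE hinnerDl hinnerDr Ssa IH IH.
Qed.

Lemma sqrt_bound_ge0 k : 0 <= q k.
Proof. by elim: k => [|k IH] //=; apply: divr_ge0 => //; have := sqr_ge0 (q k); lra. Qed.

Lemma sqrt_bound_le1 k : q k <= 1.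
Proof.
elim: k => [|k IH] //=; have := sqrt_bound_ge0 k => h0.
by rewrite ler_pdivrMr // expr2; nra.
Qed.

Lemma normc_half : normc half = 2^-1.
Proof. by rewrite normc_real ger0_norm // invr_ge0. Qed.

Lemma sqrt_iter_le k v : hnorm (Y k v) <= q k * hnorm v.
Proof.
elim: k v => [|k IH] v /=; first by rewrite hnorm0 mul0r.
rewrite hnormZ normc_half.
have := hnormD (S v) (Y k (Y k v)); have := IH (Y k v); have := Scontr v.
have : q k * hnorm (Y k v) <= q k * (q k * hnorm v).
  by rewrite ler_wpM2l ?sqrt_bound_ge0 ?IH.
move=> h1 h2 h3 h4.
have -> : (1 + q k ^+ 2) / 2 * hnorm v = 2^-1 * (hnorm v + q k * (q k * hnorm v)) by ring.
by rewrite ler_wpM2l ?invr_ge0 //; lra.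
Qed.

(* [Y_(k+2) - Y_(k+1) = (Y_(k+1) + Y_k) (Y_(k+1) - Y_k) / 2], since all [Y_k] commute. *)
Lemma sqrt_iter_step k v : hnorm (Y k.+1 v - Y k v) <= (q k.+1 - q k) * hnorm v.
Proof.
elim: k v => [|k IH] v.
  rewrite /= addr0 subr0 hnormZ normc_half expr0n /= addr0 subr0 mul1r.
  by rewrite ler_wpM2l ?invr_ge0.
set D := Y k.+1 v - Y k v.
have -> : Y k.+2 v - Y k.+1 v = half *: (Y k.+1 D + Y k D).
  rewrite /D !(linB (sqrt_iter_linear _)) (sqrt_iter_comm k k.+1).
  rewrite [Y k.+2 v]/= [Y k.+1 v in X in _ - X]/= -scalerBr.
  by congr (_ *: _); rewrite opprD addrACA subrr add0r addrA subrK.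
rewrite hnormZ normc_half.
have h1 := hnormD (Y k.+1 D) (Y k D).
have h2 := sqrt_iter_le k.+1 D; have h3 := sqrt_iter_le k D.
have h4 : (q k.+1 + q k) * hnorm D <= (q k.+1 + q k) * ((q k.+1 - q k) * hnorm v).
  by rewrite ler_wpM2l ?addr_ge0 ?sqrt_bound_ge0 ?IH.
have -> : q k.+2 - q k.+1 = 2^-1 * ((q k.+1 + q k) * (q k.+1 - q k)) by rewrite /=; ring.
by rewrite -mulrA ler_wpM2l ?invr_ge0 //; lra.
Qed.

Lemma sqrt_iter_dist k m v : hnorm (Y (k + m) v - Y k v) <= (q (k + m) - q k) * hnorm v.
Proof.
elim: m => [|m IH]; first by rewrite addn0 !subrr hnorm0 mul0r.
rewrite addnS.
have := hdist_triangle (Y (k + m).+1 v) (Y (k + m) v) (Y k v).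
have := sqrt_iter_step (k + m) v.
have -> : (q (k + m).+1 - q k) * hnorm v
    = (q (k + m).+1 - q (k + m)) * hnorm v + (q (k + m) - q k) * hnorm v by ring.
lra.
Qed.

Lemma sqrt_bound_rate k : (k.+2%:R : R) * (1 - q k) <= 2.
Proof.
elim: k => [|k IH]; first by rewrite /= subr0 mulr1.
have q0 := sqrt_bound_ge0 k; have q1 := sqrt_bound_le1 k.
rewrite -[k.+3]addn1 natrD.
have x2 : 2 <= (k.+2%:R : R) by rewrite ler_nat.
have -> : 1 - q k.+1 = (1 - q k) - (1 - q k) ^+ 2 / 2 by rewrite /=; field.
move: IH x2; set x := (k.+2%:R : R); set e := 1 - q k.
have e0 : 0 <= e by rewrite /e; lra.
have e1 : e <= 1 by rewrite /e; lra.
rewrite expr2; nra.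
Qed.

Lemma sqrt_bound_cvg (e : R) : 0 < e -> exists N, 1 - q N < e.
Proof.
move=> e0; have [N hN] := invSn_lt (divr_gt0 e0 (ltr0Sn R 1)).
exists N; have := sqrt_bound_rate N.
have hp : 0 < (N.+1%:R : R) by rewrite ltr0Sn.
move: hN; set a := (N.+1%:R : R)^-1 => hN h.
have ha : a * N.+1%:R = 1 by rewrite /a mulVf // pnatr_eq0.
suff : 1 - q N <= 2 * a by lra.
rewrite -(ler_pM2r hp) -mulrA ha mulr1 mulrC; apply: le_trans h.
by rewrite ler_wpM2r ?ler_nat // subr_ge0 sqrt_bound_le1.
Qed.

Lemma sqrt_iter_cauchy v : hcauchy (fun k => Y k v).
Proof.
move=> e e0.
have c0 : 0 < 2 * (hnorm v + 1) by have := hnorm_ge0 v; lra.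
have [N hN] := sqrt_bound_cvg (divr_gt0 e0 c0).
have qN : 0 <= 1 - q N by rewrite subr_ge0 sqrt_bound_le1.
have near j : (N <= j)%N -> hnorm (Y j v - Y N v) <= (1 - q N) * hnorm v.
  move=> hj; rewrite -(subnKC hj); apply: le_trans (sqrt_iter_dist N (j - N) v) _.
  by rewrite ler_wpM2r ?hnorm_ge0 // lerD2r sqrt_bound_le1.
have small : (1 - q N) * hnorm v < e / 2.
  move: hN; rewrite ltr_pdivlMr // => hN.
  have : (1 - q N) * hnorm v <= (1 - q N) * (hnorm v + 1) by rewrite ler_wpM2l // lerDl.
  lra.
exists N => m n hm hn; apply: le_lt_trans (hdist_triangle _ (Y N v) _) _.
have := near m hm; have := near n hn; rewrite (hdistC (Y N v)); lra.
Qed.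

Section Limit.
Variable Yinf : H -> H.
Hypothesis YinfP : forall v, hlim (fun k => Y k v) (Yinf v).

Lemma sqrt_lim_linear : linear Yinf.
Proof.
move=> a u w; apply: hlim_unique (YinfP _) _.
by apply: hlim_ext (hlim_lin a (YinfP u) (YinfP w)) => n; rewrite (sqrt_iter_linear n).
Qed.

Lemma sqrt_lim_contr v : hnorm (Yinf v) <= hnorm v.
Proof.
have := @hlim_bound _ _ _ _ 0 (hnorm v) (YinfP v); rewrite subr0; apply => n.
by rewrite subr0; apply: le_trans (sqrt_iter_le n v) _; rewrite ler_piMl ?hnorm_ge0 ?sqrt_bound_le1.
Qed.

Lemma sqrt_lim_selfadjoint : selfadjoint_op Yinf.
Proof.
move=> u v; apply/eqP; rewrite -subr_eq0; apply/eqP; apply: eq0_small_normc => e e0.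
have c0 : 0 < hnorm u + hnorm v + 1 by have := hnorm_ge0 u; have := hnorm_ge0 v; lra.
set dl := e / (hnorm u + hnorm v + 1).
have dl0 : 0 < dl by rewrite divr_gt0.
have [N1 hN1] := YinfP u dl0; have [N2 hN2] := YinfP v dl0.
set k := maxn N1 N2.
have h1 := hN1 k (leq_maxl _ _); have h2 := hN2 k (leq_maxr _ _).
have -> : ip (Yinf u) v - ip u (Yinf v) = ip (Yinf u - Y k u) v - ip u (Yinf v - Y k v).
  by rewrite hinnerBl hinnerBr sqrt_iter_selfadjoint; ring.
apply: le_trans (le_normcD _ _) _; rewrite normcN.
have := normc_hinner_le (Yinf u - Y k u) v; have := normc_hinner_le u (Yinf v - Y k v).
rewrite !(hdistC (Yinf _)).
have : hnorm (Y k u - Yinf u) * hnorm v <= dl * hnorm v by rewrite ler_wpM2r ?hnorm_ge0 ?ltW.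
have : hnorm u * hnorm (Y k v - Yinf v) <= hnorm u * dl by rewrite ler_wpM2l ?hnorm_ge0 ?ltW.
have : dl * hnorm v + hnorm u * dl <= e.
  have -> : dl * hnorm v + hnorm u * dl = e * ((hnorm u + hnorm v) / (hnorm u + hnorm v + 1)).
    by rewrite /dl; ring.
  by rewrite ger_pMr // ler_pdivrMr // mul1r; lra.
lra.
Qed.

Lemma sqrt_iter_sqr_lim v : hlim (fun k => Y k (Y k v)) (Yinf (Yinf v)).
Proof.
move=> e e0.
have [N1 hN1] := YinfP v (divr_gt0 e0 (ltr0Sn R 1)).
have [N2 hN2] := YinfP (Yinf v) (divr_gt0 e0 (ltr0Sn R 1)).
exists (maxn N1 N2) => n; rewrite geq_max => /andP[hn1 hn2].
have -> : Y n (Y n v) - Yinf (Yinf v) = Y n (Y n v - Yinf v) + (Y n (Yinf v) - Yinf (Yinf v)).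
  by rewrite (linB (sqrt_iter_linear n)) addrA subrK.
apply: le_lt_trans (hnormD _ _) _.
have := sqrt_iter_le n (Y n v - Yinf v).
have : q n * hnorm (Y n v - Yinf v) <= hnorm (Y n v - Yinf v).
  by rewrite ler_piMl ?hnorm_ge0 ?sqrt_bound_le1.
have := hN1 n hn1; have := hN2 n hn2; lra.
Qed.

Lemma sqrt_lim_fix v : Yinf v + Yinf v = S v + Yinf (Yinf v).
Proof.
have Yv : Yinf v = half *: (S v + Yinf (Yinf v)).
  apply: hlim_unique (hlimS (YinfP v)) _.
  have := hlim_lin half (hlim_lin 1 (hlim_cst (S v)) (sqrt_iter_sqr_lim v)) (hlim_cst 0).
  by rewrite addr0 scale1r; apply: hlim_ext => n; rewrite addr0.
rewrite -mulr2n -scaler_nat {1}Yv scalerA.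
have -> : (2%:R : R[i]) * half = 1.
  by rewrite -(rmorph_nat (real_complex R) 2) -rmorphM mulfV ?pnatr_eq0.
by rewrite scale1r.
Qed.

End Limit.

Theorem compl_contraction_sqrt : exists C : H -> H,
  [/\ bounded_op C, selfadjoint_op C, positive_op C & forall v, C (C v) = v - S v].
Proof.
have /choice[Yinf YinfP] : forall v, exists l, hlim (fun k => Y k v) l.
  by move=> v; apply: hcauchy_lim (sqrt_iter_cauchy v).
have Ylin := sqrt_lim_linear YinfP; have Ysa := sqrt_lim_selfadjoint YinfP.
exists (fun v => v - Yinf v); split.
- split; first exact: linearB_id.
  exists 2 => v; apply: le_trans (hnormD _ _) _; rewrite hnormN.
  by have := sqrt_lim_contr YinfP v; lra.
- exact: selfadjointB_id.
- move=> v; rewrite hinnerBr.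
  have -> : ip v (Yinf v) = (complex.Re (ip v (Yinf v)))%:C.
    by apply: selfconjc_real; rewrite -hinner_conj Ysa.
  rewrite hinner_self -rmorphB lecR subr_ge0.
  apply: le_trans (Re_hinner_le _ _) _.
  by rewrite -hnorm_sqr expr2 ler_wpM2l ?hnorm_ge0 // sqrt_lim_contr.
- move=> v; rewrite (linB Ylin).
  have -> : Yinf (Yinf v) = Yinf v + Yinf v - S v by rewrite (sqrt_lim_fix YinfP) addrC addKr.
  by rewrite opprB (addrAC (Yinf v + Yinf v)) addrK addrA subrK.
Qed.

End ContractionSqrt.

Section Combinations.
Variables (R : realType) (X : Type).
Implicit Types (s t : seq (R[i] * X)) (a : R[i]).

Definition gram (H : hilbert R) (h : X -> H) (x y : X) : R[i] := hinner H (h x) (h y).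

Definition comb (H : hilbert R) (h : X -> H) s : H := \sum_(q <- s) q.1 *: h q.2.

Definition scale_comb a s := [seq (a * q.1, q.2) | q <- s].

Lemma comb_nil (H : hilbert R) (h : X -> H) : comb h [::] = 0.
Proof. by rewrite /comb big_nil. Qed.

Lemma comb_cat (H : hilbert R) (h : X -> H) s t : comb h (s ++ t) = comb h s + comb h t.
Proof. by rewrite /comb big_cat. Qed.

Lemma comb_scale (H : hilbert R) (h : X -> H) a s : comb h (scale_comb a s) = a *: comb h s.
Proof. by rewrite /comb big_map scaler_sumr; apply: eq_bigr => q _; rewrite scalerA. Qed.

Lemma comb_sub (H : hilbert R) (h : X -> H) s t :
  comb h (s ++ scale_comb (-1) t) = comb h s - comb h t.
Proof. by rewrite comb_cat comb_scale scaleN1r. Qed.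

Lemma comb_tnth (H : hilbert R) (h : X -> H) s :
  comb h s = \sum_(i < size s) (tnth (in_tuple s) i).1 *: h (tnth (in_tuple s) i).2.
Proof. exact: big_tnth. Qed.

End Combinations.

Section GramContraction.
Variables (R : realType) (X : Type) (H1 H2 : hilbert R) (f : X -> H1) (g : X -> H2).
Hypothesis gram_le : kernel_le (gram f) (gram g).
Implicit Types (s t : seq (R[i] * X)).

Lemma hnorm2_comb_le s : hnorm2 (comb f s) <= hnorm2 (comb g s).
Proof.
move: (gram_le (fun i => (tnth (in_tuple s) i).2) (fun i => (tnth (in_tuple s) i).1)).
rewrite /gram; under eq_bigr do under eq_bigr do rewrite mulrBr.
under eq_bigr do rewrite sumrB.
by rewrite sumrB subr_ge0 lecE /hnorm2 !comb_tnth !hinner_comb => /andP[_].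
Qed.

Lemma comb_dist_le s t : hnorm (comb f s - comb f t) <= hnorm (comb g s - comb g t).
Proof. by rewrite -!comb_sub ler_hnorm hnorm2_comb_le. Qed.

(* [y] is the value at [u] of the extension of [comb g s |-> comb f s]: approximate
   the projection [p] of [u] on the closed span of [g] by combinations [sq n]. *)
Definition extension_graph (u : H2) (y : H1) :=
  exists (p : H2) (sq : nat -> seq (R[i] * X)),
  [/\ hlim (fun n => comb g (sq n)) p, (forall s, hinner H2 (comb g s) (u - p) = 0) &
      hlim (fun n => comb f (sq n)) y].

Lemma extension_graph_total u : exists y, extension_graph u y.
Proof.
pose M v := exists s, v = comb g s.
have M0 : M 0 by exists [::]; rewrite comb_nil.
have Mlin a v w : M v -> M w -> M (a *: v + w).
  by move=> [s ->] [t ->]; exists (scale_comb a s ++ t); rewrite comb_cat comb_scale.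
have [p [[ms [Mms hp]] orth]] := hprojection M0 Mlin u.
have [sq hsq] := choice Mms.
have hp' : hlim (fun n => comb g (sq n)) p by apply: hlim_ext hp.
have [y hy] : exists y, hlim (fun n => comb f (sq n)) y.
  apply: hcauchy_lim => e e0; have [N hN] := hlim_cauchy hp' e0.
  by exists N => i j hi hj; apply: le_lt_trans (comb_dist_le _ _) (hN i j hi hj).
by exists y, p, sq; split => // s; apply: orth; exists s.
Qed.

Lemma extension_graph_functional u y y' :
  extension_graph u y -> extension_graph u y' -> y = y'.
Proof.
move=> [p [sq [hp orth hy]]] [p' [sq' [hp' orth' hy']]].
pose dsq n := sq n ++ scale_comb (-1) (sq' n).
have hd : hlim (fun n => comb g (dsq n)) (p - p').
  have := hlim_lin (-1) hp' hp; rewrite scaleN1r addrC; apply: hlim_ext => n.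
  by rewrite /dsq comb_sub scaleN1r addrC.
have pp : p = p'.
  apply/eqP; rewrite -subr_eq0; apply/eqP/hinner_eq0.
  apply: hlim_hinner0 hd _ => n.
  have -> : p - p' = (u - p') - (u - p).
    by rewrite [in RHS]opprB [in RHS]addrC [in RHS]addrA subrK.
  by rewrite hinnerBr orth orth' subrr.
rewrite -pp in hp'; apply: hlim_unique hy _.
apply: hlim_of_dist_le hp' hp hy' _ => n.
by rewrite hdistC (hdistC (comb g _)); exact: comb_dist_le.
Qed.

Lemma extension_graph_lin (a : R[i]) u w y z : extension_graph u y -> extension_graph w z ->
  extension_graph (a *: u + w) (a *: y + z).
Proof.
move=> [p [sq [hp orth hy]]] [p' [sq' [hp' orth' hy']]].
exists (a *: p + p'), (fun n => scale_comb a (sq n) ++ sq' n); split.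
- by apply: hlim_ext (hlim_lin a hp hp') => n; rewrite comb_cat comb_scale.
- move=> s; have -> : a *: u + w - (a *: p + p') = a *: (u - p) + (w - p').
    by rewrite scalerBr opprD addrACA.
  by rewrite hinnerDr hinnerZr orth orth' mulr0 addr0.
- by apply: hlim_ext (hlim_lin a hy hy') => n; rewrite comb_cat comb_scale.
Qed.

Lemma extension_graph_gen x : extension_graph (g x) (f x).
Proof.
have comb1 (H : hilbert R) (h : X -> H) : comb h [:: (1, x)] = h x.
  by rewrite /comb big_seq1 scale1r.
exists (g x), (fun _ => [:: (1, x)]); split.
- by apply: hlim_ext (hlim_cst (g x)) => n; rewrite comb1.
- by move=> s; rewrite subrr hinner0r.
- by apply: hlim_ext (hlim_cst (f x)) => n; rewrite comb1.
Qed.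

Lemma extension_graph_contr u y : extension_graph u y -> hnorm y <= hnorm u.
Proof.
move=> [p [sq [hp orth hy]]].
have op : hinner H2 p (u - p) = 0 by apply: hlim_hinner0 hp _ => n; exact: orth.
have hpu : hnorm p <= hnorm u.
  rewrite ler_hnorm -[X in _ <= hnorm2 X](subrK p) hnorm2D op hinner_conj op conjc0 /=.
  by rewrite !addr0 lerDr hnorm2_ge0.
apply: le_trans hpu; apply/ler_addgt0Pr => e e0.
have e2 : 0 < e / 2 by rewrite divr_gt0.
have [N1 h1] := hp _ e2; have [N2 h2] := hy _ e2.
set n := maxn N1 N2.
have := h1 n (leq_maxl _ _); have := h2 n (leq_maxr _ _).
have := comb_dist_le (sq n) [::]; rewrite !comb_nil !subr0.
have := hdist_triangle y (comb f (sq n)) 0; rewrite !subr0 (hdistC y).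
have := hdist_triangle (comb g (sq n)) p 0; rewrite !subr0.
lra.
Qed.

Theorem gram_le_contraction : exists G : H2 -> H1,
  [/\ linear G, forall v, hnorm (G v) <= hnorm v & forall x, G (g x) = f x].
Proof.
have [G GP] := choice extension_graph_total.
exists G; split.
- move=> a u w; apply: extension_graph_functional (GP _) _.
  exact: extension_graph_lin.
- by move=> v; apply: extension_graph_contr (GP v).
- by move=> x; apply: extension_graph_functional (GP _) (extension_graph_gen x).
Qed.

End GramContraction.

Section AdjointProduct.
Variables (R : realType) (H1 H2 : hilbert R) (G : H2 -> H1) (Gadj : H1 -> H2).
Hypotheses (Glin : linear G) (Gcontr : forall v, hnorm (G v) <= hnorm v)
  (Gadj_adj : forall w u, hinner H2 (Gadj w) u = hinner H1 w (G u)).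
Local Notation B := (fun v => Gadj (G v)).

Lemma adjoint_product_selfadjoint : selfadjoint_op B.
Proof. by move=> u v /=; rewrite Gadj_adj [RHS]hinner_conj Gadj_adj -hinner_conj. Qed.

Lemma hinner_adjoint_product v : hinner H2 v (B v) = hinner H1 (G v) (G v).
Proof. by rewrite -adjoint_product_selfadjoint Gadj_adj. Qed.

Lemma adjoint_product_linear : linear B.
Proof.
move=> a u w /=; apply: hinner_injl => x.
by rewrite Gadj_adj Glin hinnerDl hinnerZl hinnerDl hinnerZl !Gadj_adj.
Qed.

Lemma hnorm_adjoint_product v : hnorm (B v) <= hnorm (G v).
Proof.
have h : hnorm2 (B v) <= hnorm (G v) * hnorm (B v).
  rewrite /hnorm2 Gadj_adj; apply: le_trans (Re_hinner_le _ _) _.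
  by rewrite ler_wpM2l ?hnorm_ge0 ?Gcontr.
rewrite -hnorm_sqr expr2 in h.
have := hnorm_ge0 (B v); have := hnorm_ge0 (G v); nra.
Qed.

Lemma adjoint_product_compl_contr v : hnorm (v - B v) <= hnorm v.
Proof.
rewrite ler_hnorm.
have -> : hnorm2 (v - B v) = hnorm2 v - 2 * hnorm2 (G v) + hnorm2 (B v).
  rewrite /hnorm2 !(hinnerBl, hinnerBr) adjoint_product_selfadjoint.
  by rewrite hinner_adjoint_product !raddfB /=; ring.
have := hnorm_adjoint_product v; rewrite ler_hnorm.
have := hnorm2_ge0 (G v); lra.
Qed.

Lemma adjoint_product_bounded : bounded_op B.
Proof.
split; first exact: adjoint_product_linear.
by exists 1 => v; rewrite mul1r; apply: le_trans (hnorm_adjoint_product v) (Gcontr v).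
Qed.

Lemma adjoint_product_positive : positive_op B.
Proof. by move=> v; rewrite hinner_adjoint_product; exact: hinner_ge0. Qed.

Lemma adjoint_product_le_id : op_le B id.
Proof.
move=> v; rewrite hinner_adjoint_product !hinner_self lecR /=.
by rewrite -!hnorm_sqr ler_pXn2r ?nnegrE ?hnorm_ge0.
Qed.

Lemma adjoint_product_sqrt : exists C : H2 -> H2, pos_sqrt_of B C.
Proof.
have [C [Cb Csa Cpos CC]] := @compl_contraction_sqrt R H2 (fun v => v - B v)
  (linearB_id adjoint_product_linear) (selfadjointB_id adjoint_product_selfadjoint)
  adjoint_product_compl_contr.
by exists C; do 3!split=> //; move=> v; rewrite CC opprB addrC subrK.
Qed.

End AdjointProduct.

Theorem gram_le_sqrt_factor (R : realType) (X : Type) (H1 H2 : hilbert R)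
    (f : X -> H1) (g : X -> H2) :
  kernel_le (gram f) (gram g) ->
  exists B : H2 -> H2,
    [/\ bounded_op B, selfadjoint_op B, positive_op B, op_le B id &
      exists C : H2 -> H2, pos_sqrt_of B C /\
        forall x y, gram f x y = hinner H2 (C (g x)) (C (g y))].
Proof.
move=> /gram_le_contraction[G [Glin Gcontr Gg]].
have Gbd v : hnorm (G v) <= 1 * hnorm v by rewrite mul1r Gcontr.
have [Gadj Gadj_adj] := hadjoint_exists Glin Gbd.
have Bsa := adjoint_product_selfadjoint Gadj_adj.
have [C hC] := adjoint_product_sqrt Glin Gcontr Gadj_adj.
exists (fun v => Gadj (G v)); split.
- exact: adjoint_product_bounded Glin Gcontr Gadj_adj.
- exact: Bsa.
- exact: adjoint_product_positive Gadj_adj.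
- exact: adjoint_product_le_id Gcontr Gadj_adj.
exists C; split=> // x y; have [_ [Csa [_ CC]]] := hC.
by rewrite Csa CC -Bsa Gadj_adj !Gg.
Qed.

Lemma sqrt_factor_gram_le (R : realType) (X : Type) (H1 H2 : hilbert R)
    (f : X -> H1) (g : X -> H2) (B C : H2 -> H2) :
  bounded_op B -> op_le B id -> pos_sqrt_of B C ->
  (forall x y, gram f x y = hinner H2 (C (g x)) (C (g y))) ->
  kernel_le (gram f) (gram g).
Proof.
move=> [Blin _] Ble [_ [Csa [_ CC]]] fC n x c.
pose w := \sum_(j < n) c j *: g (x j).
have lin_compl := linearB_id Blin.
suff -> : \sum_(i < n) \sum_(j < n) ((c i)^* * c j * (gram g (x i) (x j) - gram f (x i) (x j)))
    = hinner H2 w (w - B w) by rewrite hinnerBr subr_ge0; exact: Ble.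
have -> : w - B w = \sum_(j < n) c j *: (g (x j) - B (g (x j))).
  by rewrite /w (lin_sum lin_compl); apply: eq_bigr => j _; rewrite (linZ lin_compl).
rewrite hinner_comb; apply: eq_bigr => i _; apply: eq_bigr => j _.
by rewrite fC Csa CC hinnerBr.
Qed.

Theorem theorem5p7 (R : realType) (X : Type) (K L : X -> X -> R[i])
  (HK : pd_kernel K) (HL : pd_kernel L)
  (HKs HLs : hilbert R) (phi : X -> HKs) (psi : X -> HLs)
  (Hphi : forall x y, K x y = hinner HKs (phi x) (phi y))
  (Hpsi : forall x y, L x y = hinner HLs (psi x) (psi y)) :
  kernel_le K L <->
  exists B : HLs -> HLs,
    [/\ bounded_op B, selfadjoint_op B, positive_op B, op_le B id &
      exists C : HLs -> HLs, pos_sqrt_of B C /\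
        forall x y, K x y = hinner HKs (phi x) (phi y) /\
                    hinner HKs (phi x) (phi y) = hinner HLs (C (psi x)) (C (psi y))].
Proof.
have eK : K = gram phi by apply/funext => x; apply/funext => y; exact: Hphi.
have eL : L = gram psi by apply/funext => x; apply/funext => y; exact: Hpsi.
rewrite eK eL; split.
- move=> /gram_le_sqrt_factor[B [Bb Bsa Bpos Ble [C [hC hfC]]]].
  by exists B; split=> //; exists C; split=> // x y; split; last exact: hfC.
- move=> [B [Bb _ _ Ble [C [hC hK]]]].
  by apply: sqrt_factor_gram_le Bb Ble hC _ => x y; exact: (hK x y).2.
Qed.
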